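(* Let $m>2$ be an odd integer, $n\ge 1$ an integer, and let $M_{2mn}=\langle a,b : a^m=b^{2n}=1,\ bab^{-1}=a^{-1}\rangle$ be the metacyclic group of order $2mn$. Let $\Gamma_{M_{2mn}}$ be its non-commuting graph. Then the spectrum of the distance matrix $D(\Gamma_{M_{2mn}})$ (eigenvalues counted with multiplicity, multiplicities being added if two of the listed values coincide) consists of: (a) $-2$ with multiplicity $2mn-(m+n)-1$; (b) $n-2$ with multiplicity $m-1$; (c) $\frac{-(4+n-3mn)+n\sqrt{5m^2-10m+9}}{2}$ and $\frac{-(4+n-3mn)-n\sqrt{5m^2-10m+9}}{2}$, each with multiplicity $1$.
   Context: For a finite non-abelian group $G$ with centre $Z(G)$, the non-commuting graph $\Gamma_G$ is the simple undirected graph with vertex set $G\setminus Z(G)$, in which two distinct vertices $u,v$ are adjacent if and only if $uv\ne vu$. For a connected graph $H$, $d_{uv}$ denotes the length of a shortest path between vertices $u$ and $v$, and the distance matrix $D(H)$ is the matrix whose $(u,v)$-entry is $d_{uv}$. *)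

From HB Require Import structures.
From mathcomp Require Import all_boot all_order all_algebra all_fingroup all_solvable all_field.
Set Implicit Arguments. Unset Strict Implicit. Unset Printing Implicit Defensive.
Import GRing.Theory Num.Theory.

Local Open Scope group_scope.

Section NonCommutingGraph.
Variable gT : finGroupType.

Definition nc_vertices (G : {group gT}) : {set gT} := G :\: 'Z(G).

(* Adjacency: both endpoints are vertices and they do not commute
   (non-commuting elements are automatically distinct). *)
Definition nc_adj (G : {group gT}) : rel gT :=
  fun x y => [&& x \in nc_vertices G, y \in nc_vertices G & x * y != y * x].

Fixpoint nc_walk (G : {group gT}) (k : nat) (x y : gT) : bool :=
  match k with
  | 0 => x == y
  | k'.+1 => [exists z, nc_adj G x z && nc_walk G k' z y]
  end.

(* Graph distance d_{xy}: the least k such that there is a walk of length k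
   from x to y (searched among 0 .. #|gT|-1, which contains all shortest-path
   lengths of any graph on a subset of gT; the fallback value #|gT| is never
   reached for a connected graph). *)
Definition nc_dist (G : {group gT}) (x y : gT) : nat :=
  find (fun k => nc_walk G k x y) (iota 0 #|gT|).

Definition nc_dist_mx (G : {group gT}) : 'M[algC]_(#|nc_vertices G|) :=
  (\matrix_(i, j) (nc_dist G (enum_val i) (enum_val j))%:R)%R.

End NonCommutingGraph.

(* The centre of M_2mn is <b^2>.  Since b inverts <a> by conjugation and squaring
   is injective on <a> (m is odd), two non-central elements commute exactly when
   they lie in the same one of m + 1 classes: the non-central elements of <a, b^2>,
   (m - 1) n of them, and for each i the n elements a^i b^(2j+1).  The
   non-commuting graph has diameter 2, so D + 2 = U (1 + J) U^T with U the
   class-indicator matrix.  Sylvester's identity s^k det (s - A B) = s^N det (s - B A)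
   reduces the characteristic polynomial of D to that of (1 + J) diag c, c the
   class sizes; this matrix is n times the identity plus a matrix of rank two, and
   a second application of the identity leaves a 2 x 2 determinant whose roots are
   the two values in (c). *)

From HB Require Import structures.
From mathcomp Require Import all_boot all_order all_algebra all_fingroup all_solvable all_field.
From mathcomp Require Import zify ring.

Set Implicit Arguments.
Unset Strict Implicit.
Unset Printing Implicit Defensive.

Import GRing.Theory Num.Theory.
Local Open Scope ring_scope.

Section Determinants.
Variable R : comPzRingType.

Lemma det_mx22 (A : 'M[R]_2) :
  \det A = A ord0 ord0 * A ord_max ord_max - A ord0 ord_max * A ord_max ord0.
Proof.
rewrite (expand_det_row _ ord0) !big_ord_recl big_ord0 addr0 /cofactor !det_mx11 !mxE /=.
rewrite expr0 expr1 !mul1r mulN1r mulrN.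
have -> : lift ord0 0 = ord_max :> 'I_2 by apply/val_inj.
by have -> : lift ord_max 0 = ord0 :> 'I_2 by apply/val_inj.
Qed.

Lemma det_scalar_sub_mulmxC N k (A : 'M[R]_(N, k)) (B : 'M[R]_(k, N)) (s : R) :
  s ^+ k * \det (s%:M - A *m B) = s ^+ N * \det (s%:M - B *m A).
Proof.
pose Y := block_mx (s%:M : 'M_N) A B (1%:M : 'M_k).
pose Z := block_mx (1%:M : 'M_N) A B (s%:M : 'M_k).
have detY : \det Y = \det (s%:M - A *m B).
  have -> : Y = block_mx (s%:M - A *m B) A 0 1%:M *m block_mx 1%:M 0 B 1%:M.
    by rewrite mulmx_block !(mul1mx, mulmx1, mul0mx, mulmx0, add0r, addr0) subrK.
  by rewrite det_mulmx det_ublock det_lblock !det1 !mulr1.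
have detZ : \det Z = \det (s%:M - B *m A).
  have -> : Z = block_mx 1%:M 0 B 1%:M *m block_mx 1%:M A 0 (s%:M - B *m A).
    by rewrite mulmx_block !(mul1mx, mulmx1, mul0mx, mulmx0, add0r, addr0) addrC subrK.
  by rewrite det_mulmx det_ublock det_lblock !det1 !mul1r.
have YZ : block_mx (s%:M : 'M_N) 0 0 (1%:M : 'M_k) *m Z
          = Y *m block_mx 1%:M 0 0 (s%:M : 'M_k).
  by rewrite !mulmx_block !(mul1mx, mulmx1, mul0mx, mulmx0, add0r, addr0)
             mul_scalar_mx mul_mx_scalar.
have := congr1 determinant YZ.
rewrite !det_mulmx detZ detY !det_ublock !det1 !det_scalar mulr1 mul1r => ->.
exact: mulrC.
Qed.

End Determinants.

Lemma char_poly_add_scalar_mulmx (R : comNzRingType) N k (D : 'M[R]_N) (c : R)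
    (A : 'M[R]_(N, k)) (B : 'M[R]_(k, N)) :
  D + c%:M = A *m B ->
  ('X + c%:P) ^+ k * char_poly D
  = ('X + c%:P) ^+ N * \det (('X + c%:P)%:M - map_mx polyC (B *m A)).
Proof.
move=> DcAB; rewrite map_mxM -det_scalar_sub_mulmxC -map_mxM -DcAB.
rewrite /char_poly /char_poly_mx map_mxD map_scalar_mx raddfD /= opprD addrACA.
by rewrite subrr addr0.
Qed.

Section ClassMatrix.
Variables (R : pzSemiRingType) (N k : nat) (f : 'I_N -> 'I_k).

Definition class_mx : 'M[R]_(N, k) := \matrix_(v, r) (f v == r)%:R.

Lemma class_mx_mul_const p : class_mx *m const_mx 1 = const_mx 1 :> 'M_(N, p).
Proof.
apply/matrixP => v w; rewrite !mxE (bigD1 (f v)) //= big1 => [|r /negbTE frv].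
  by rewrite !mxE eqxx mulr1 addr0.
by rewrite !mxE eq_sym frv mul0r.
Qed.

Lemma class_mx_mul_tr :
  class_mx *m class_mx^T = \matrix_(v, w) (f v == f w)%:R.
Proof.
apply/matrixP => v w; rewrite !mxE (bigD1 (f v)) //= big1 => [|r /negbTE frv].
  by rewrite !mxE eqxx mul1r addr0 eq_sym.
by rewrite !mxE eq_sym frv mul0r.
Qed.

Lemma tr_class_mx_mul :
  class_mx^T *m class_mx = diag_mx (\row_r #|[pred v | f v == r]|%:R).
Proof.
apply/matrixP => r q; rewrite !mxE.
under eq_bigr do rewrite !mxE -natrM mulnb.
rewrite -natr_sum; have [<-|rq] := eqVneq r q.
  rewrite mulr1n; congr _%:R; rewrite -sum1_card [RHS]big_mkcond.
  by apply: eq_bigr => v _; rewrite andbb inE; case: eqP.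
by rewrite mulr0n big1 // => v _; case: eqP => // ->; rewrite (negbTE rq).
Qed.

Lemma class_mx_mul_one_add_const :
  class_mx *m (1%:M + const_mx 1) *m class_mx^T
  = \matrix_(v, w) ((f v == f w)%:R + 1).
Proof.
have const_tr : const_mx 1 *m class_mx^T = const_mx 1 :> 'M_(k, N).
  apply/matrixP => r w; rewrite !mxE (bigD1 (f w)) //= big1 => [|q /negbTE fwq].
    by rewrite !mxE eqxx mulr1 addr0.
  by rewrite !mxE eq_sym fwq mulr0.
rewrite mulmxDr mulmx1 mulmxDl -mulmxA const_tr class_mx_mul_const class_mx_mul_tr.
by apply/matrixP => v w; rewrite !mxE.
Qed.

End ClassMatrix.

Section OneAddConstMulDiag.
Variables (R : comPzRingType) (k : nat) (d e : R).

Let c : 'rV[R]_k.+1 := \row_r (if r == ord0 then d else e).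

Lemma det_scalar_sub_one_add_const_mul_diag t :
  t ^+ 2 * \det ((t + e)%:M - (1%:M + const_mx 1) *m diag_mx c)
  = t ^+ k.+1 * ((t - (d - e)) * (t - (d + e *+ k)) - (d - e) * d).
Proof.
pose U : 'M[R]_(k.+1, 2) := \matrix_(r, i) (if i == ord0 then (r == ord0)%:R else 1).
pose V : 'M[R]_(2, k.+1) :=
  \matrix_(i, q) (if i == ord0 then (q == ord0)%:R * (d - e) else c 0 q).
have splitM : (1%:M + const_mx 1) *m diag_mx c = e%:M + U *m V.
  apply/matrixP => r q; rewrite mul_mx_diag !mxE big_ord_recl big_ord1 !mxE /=.
  have [<-|rq] := eqVneq r q; first by case: (r == ord0); rewrite /=; ring.
  case: (eqVneq q ord0) => [q0|]; last by move=> _ /=; ring.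
  by move: rq; rewrite q0 => /negbTE ->; rewrite /=; ring.
have VU : V *m U
    = \matrix_(i, j) (if i == ord0 then d - e else if j == ord0 then d else d + e *+ k).
  apply/matrixP => i j; rewrite !mxE big_ord_recl !mxE /=.
  under eq_bigr do rewrite !mxE /=.
  case: (i == ord0); case: (j == ord0); rewrite ?(mul0r, mulr0, mul1r, mulr1).
  - by rewrite big1 ?addr0 // => r _; rewrite mul0r.
  - by rewrite big1 ?addr0 // => r _; rewrite mul0r.
  - by rewrite big1 ?addr0 // => r _; rewrite mulr0.
  - by rewrite sumr_const card_ord.
rewrite splitM opprD addrA -raddfB /= addrK det_scalar_sub_mulmxC det_mx22 VU !mxE /=.
by rewrite mulr1n mulr0n !sub0r mulrNN.
Qed.
End OneAddConstMulDiag.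

Section NonCommutingGraphDistance.
Local Open Scope group_scope.
Variables (gT : finGroupType) (G : {group gT}).

Lemma mem_nc_vertices x z :
  x \in G -> z \in G -> x * z != z * x -> x \in nc_vertices G.
Proof.
move=> xG zG xz; rewrite inE xG andbT; apply: contra xz => /centerP[_ cxG].
by rewrite (cxG z zG).
Qed.

Lemma nc_vertexP x : x \in nc_vertices G -> exists2 z, z \in G & x * z != z * x.
Proof.
rewrite inE => /andP[xZ xG]; apply/exists_inP; rewrite -negb_forall_in.
by apply: contra xZ => /forall_inP cxG; apply/centerP; split=> // z /cxG/eqP.
Qed.

Lemma nc_adjE x y : x \in nc_vertices G -> y \in nc_vertices G ->
  nc_adj G x y = (x * y != y * x).
Proof. by move=> xV yV; rewrite /nc_adj xV yV. Qed.

(* If no neighbour of [x] is a neighbour of [y], pick [z1] not commuting with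
   [x] and [z2] not commuting with [y]: then [z1 * z2] commutes with neither. *)
Lemma nc_common_neighbour x y : x \in nc_vertices G -> y \in nc_vertices G ->
  exists z, nc_adj G x z && nc_adj G z y.
Proof.
move=> xV yV; have [xG yG] : x \in G /\ y \in G.
  by move: xV yV; rewrite !inE => /andP[_ ->] /andP[_ ->].
have [z1 z1G xz1] := nc_vertexP xV; have [z2 z2G yz2] := nc_vertexP yV.
have z1V : z1 \in nc_vertices G by apply: (mem_nc_vertices z1G xG); rewrite eq_sym.
have z2V : z2 \in nc_vertices G by apply: (mem_nc_vertices z2G yG); rewrite eq_sym.
have [yz1 | /negbNE/eqP cyz1] := boolP (y * z1 != z1 * y).
  by exists z1; rewrite !nc_adjE // xz1 eq_sym.
have [xz2 | /negbNE/eqP cxz2] := boolP (x * z2 != z2 * x).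
  by exists z2; rewrite !nc_adjE // xz2 eq_sym.
have z12G : z1 * z2 \in G by rewrite groupM.
have xz12 : x * (z1 * z2) != z1 * z2 * x.
  apply: contra xz1 => /eqP cxz12; apply/eqP.
  by rewrite -(mulgK z2 z1); apply: commuteM => //; apply: commuteV.
have yz12 : y * (z1 * z2) != z1 * z2 * y.
  apply: contra yz2 => /eqP cyz12; apply/eqP.
  by rewrite -(mulKg z1 z2); apply: commuteM => //; apply: commuteV.
have z12V : z1 * z2 \in nc_vertices G.
  by apply: (mem_nc_vertices z12G xG); rewrite eq_sym.
by exists (z1 * z2); rewrite !nc_adjE // xz12 eq_sym.
Qed.

Lemma nc_distE x y : x \in nc_vertices G -> y \in nc_vertices G ->
  nc_dist G x y = if x == y then 0%N else if x * y == y * x then 2%N else 1%N.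
Proof.
move=> xV yV; have [z _ xz] := nc_vertexP xV.
(* [nc_dist] only searches lengths below [#|gT|]. *)
have gT_gt2 : (2 < #|gT|)%N.
  have x1 : x != 1 by apply: contra xz => /eqP ->; rewrite mul1g mulg1.
  have z1 : z != 1 by apply: contra xz => /eqP ->; rewrite mul1g mulg1.
  have xzne : x != z by apply: contra xz => /eqP ->.
  have uniq1xz : uniq [:: 1; x; z].
    by rewrite /= !inE !negb_or ![1 == _]eq_sym x1 z1 xzne.
  by rewrite -[3%N]/(size [:: 1; x; z]) -(card_uniqP uniq1xz) max_card.
have walk1 : nc_walk G 1 x y = nc_adj G x y.
  by apply/existsP/idP => [[w /andP[xw /eqP <-]] // | xy]; exists y; rewrite xy /=.
have walk2 : nc_walk G 2 x y.
  have [w /andP[xw wy]] := nc_common_neighbour xV yV.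
  by apply/existsP; exists w; rewrite xw /=; apply/existsP; exists y; rewrite wy /=.
rewrite /nc_dist; case: #|gT| gT_gt2 => [|[|[|k]]] // _.
rewrite /= -/(nc_walk G 1 x y) -/(nc_walk G 2 x y) walk1 walk2 nc_adjE //.
by case: (x == y); case: (x * y == y * x).
Qed.

End NonCommutingGraphDistance.

Section CommutingClasses.
Variables (gT : finGroupType) (G : {group gT}) (k : nat) (cls : gT -> 'I_k).
Local Notation V := (nc_vertices G).
Hypothesis commute_cls :
  {in V &, forall x y, (x * y == y * x)%g = (cls x == cls y)}.

Let f (v : 'I_#|V|) := cls (enum_val v).

Lemma nc_dist_mx_add2 :
  nc_dist_mx G + 2%:M = class_mx algC f *m (1%:M + const_mx 1) *m (class_mx algC f)^T.
Proof.
rewrite class_mx_mul_one_add_const; apply/matrixP => v w; rewrite !mxE.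
rewrite nc_distE ?enum_valP // commute_cls ?enum_valP // (inj_eq enum_val_inj).
have [->|_] := eqVneq v w; first by rewrite eqxx add0r.
by rewrite /f mulr0n addr0; case: eqP; rewrite ?add0r.
Qed.

Lemma card_class_enum_val r : #|[pred v | f v == r]| = #|[set x in V | cls x == r]|.
Proof.
rewrite -sum1dep_card (big_enum_val_cond (fun x => cls x == r)) sum1dep_card.
by apply: eq_card => v; rewrite !inE.
Qed.

Lemma card_nc_vertices_classes : #|V| = (\sum_r #|[set x in V | cls x == r]|)%N.
Proof.
rewrite -sum1_card (partition_big cls xpredT) //.
by apply: eq_bigr => r _; rewrite sum1dep_card.
Qed.

End CommutingClasses.

Lemma char_poly_nc_dist_mx_classes (gT : finGroupType) (G : {group gT}) k
    (cls : gT -> 'I_k.+1) (d e : nat) :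
  {in nc_vertices G &, forall x y, (x * y == y * x)%g = (cls x == cls y)} ->
  (forall r, #|[set x in nc_vertices G | cls x == r]| = if r == ord0 then d else e) ->
  let s := 'X + 2%:P in let t := s - e%:R in
  s ^+ k.+1 * t ^+ 2 * char_poly (nc_dist_mx G)
  = s ^+ (d + k * e) * t ^+ k.+1
    * ((t - (d%:R - e%:R)) * (t - (d%:R + e%:R *+ k)) - (d%:R - e%:R) * d%:R).
Proof.
move=> commute_cls card_cls s t.
have cardV : #|nc_vertices G| = (d + k * e)%N.
  rewrite (card_nc_vertices_classes _ cls) big_ord_recl card_cls eqxx.
  by under eq_bigr do rewrite card_cls; rewrite sum_nat_const card_ord.
have := char_poly_add_scalar_mulmx (etrans (nc_dist_mx_add2 commute_cls) (esym (mulmxA _ _ _))).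
rewrite -mulmxA tr_class_mx_mul.
have map_J : map_mx polyC (const_mx 1 : 'M[algC]_k.+1) = const_mx 1.
  by apply/matrixP => i j; rewrite !mxE polyC1.
rewrite map_mxM map_mxD map_scalar_mx rmorph1 map_J map_diag_mx -/s => shift_s.
set c := map_mx polyC _ in shift_s.
have c_eq : c = \row_r (if r == ord0 then d%:R else e%:R).
  by apply/matrixP => i r; rewrite !mxE card_class_enum_val card_cls rmorph_nat; case: eqP.
rewrite {}c_eq in shift_s.
have := det_scalar_sub_one_add_const_mul_diag k (d%:R : {poly algC}) e%:R t.
rewrite subrK -/s => det_t.
by rewrite mulrAC shift_s mulrAC -mulrA det_t mulrA cardV.
Qed.

Section InvertingConjugation.
Local Open Scope group_scope.
Variables (gT : finGroupType) (a b : gT).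
Hypothesis conj_b_a : b * a * b^-1 = a^-1.

Lemma cycle_commute u v : u \in <[a]> -> v \in <[a]> -> commute u v.
Proof. by case/cycleP=> i ->; case/cycleP=> k ->; apply: commuteX2. Qed.

Lemma mul_b_cycle u : u \in <[a]> -> b * u = u^-1 * b.
Proof.
case/cycleP=> i ->; rewrite -(mulgKV b (b * _)); congr (_ * b).
by rewrite -{1}[b]invgK -mulgA -conjgE conjXg conjgE invgK mulgA conj_b_a expVgn.
Qed.

Lemma expg_b_mul_cycle j u :
  u \in <[a]> -> b ^+ j * u = (if odd j then u^-1 else u) * b ^+ j.
Proof.
move=> uA; elim: j => [|j IHj]; first by rewrite expg0 mulg1 mul1g.
have uA' : (if odd j then u^-1 else u) \in <[a]> by case: ifP; rewrite ?groupV.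
by rewrite expgS -mulgA IHj mulgA mul_b_cycle // -mulgA /=; case: (odd j); rewrite ?invgK.
Qed.

Hypothesis odd_a : odd #[a].

Lemma cycle_sqr_inj u v : u \in <[a]> -> v \in <[a]> -> (u ^+ 2 == v ^+ 2) = (u == v).
Proof.
have coA2 : coprime #|<[a]>| 2 by rewrite coprimen2.
move=> uA vA; apply/eqP/eqP => [uv2 | -> //].
by rewrite -(expgK coA2 uA) uv2 (expgK coA2 vA).
Qed.

Lemma cycle_invg_eq u : u \in <[a]> -> (u^-1 == u) = (u == 1).
Proof.
move=> uA; rewrite -(cycle_sqr_inj uA (group1 _)) expg1n -(inj_eq (mulgI u)) mulgV eq_sym.
by rewrite expg2.
Qed.

Lemma cycle_mul_invg_eq u v : u \in <[a]> -> v \in <[a]> ->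
  (u * v^-1 == v * u^-1) = (u == v).
Proof.
move=> uA vA; rewrite -(cycle_sqr_inj uA vA) -[LHS](inj_eq (mulIg (u * v))) !expg2.
by rewrite -(mulgA v) mulKg -(mulgA u) (cycle_commute uA vA) mulKg.
Qed.

Lemma commute_cycle_mul_b j l u v : u \in <[a]> -> v \in <[a]> ->
  (u * b ^+ j * (v * b ^+ l) == v * b ^+ l * (u * b ^+ j))
  = if odd j then (if odd l then u == v else v == 1)
    else (if odd l then u == 1 else true).
Proof.
move=> uA vA; have cuv := cycle_commute uA vA.
rewrite -!mulgA !(mulgA (b ^+ _)) !expg_b_mul_cycle // -!mulgA -!expgD !mulgA addnC.
rewrite (inj_eq (mulIg _)); case: (odd j); case: (odd l) => /=.
- exact: cycle_mul_invg_eq.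
- by rewrite -cuv (inj_eq (mulgI u)) cycle_invg_eq.
- by rewrite cuv (inj_eq (mulgI v)) eq_sym cycle_invg_eq.
- by rewrite cuv eqxx.
Qed.

End InvertingConjugation.

Section MetacyclicGroup.
Local Open Scope group_scope.
Variables (gT : finGroupType) (G : {group gT}) (a b : gT) (m n : nat).
Hypotheses (odd_m : odd m) (m_gt1 : (1 < m)%N) (n_gt0 : (0 < n)%N).
Hypotheses (defG : (G : {set gT}) = <<[set a; b]>>) (am : a ^+ m = 1).
Hypotheses (b2n : b ^+ (2 * n) = 1) (conj_b_a : b * a * b^-1 = a^-1).
Hypothesis cardG : #|G| = (2 * m * n)%N.

Let m_gt0 : (0 < m)%N. Proof. exact: ltnW. Qed.

Definition meta_elt (p : 'I_m * 'I_n * bool) : gT := a ^+ p.1.1 * b ^+ (p.2 + 2 * p.1.2).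

Lemma meta_elt_in p : meta_elt p \in G.
Proof. by rewrite defG groupM ?groupX ?mem_gen // !inE eqxx ?orbT. Qed.

Lemma meta_elt_onto x : x \in G -> exists p, x = meta_elt p.
Proof.
have aJb : a ^ b = a^-1.
  have ba : b * a^-1 = a * b.
    by rewrite (mul_b_cycle conj_b_a (u := a^-1)) ?groupV ?cycle_id // invgK.
  by rewrite conjgE -ba mulKg.
have nAB : <[b]> \subset 'N(<[a]>).
  by rewrite cycle_subG; apply/normP; rewrite -cycleJ aJb cycleV.
have GAB : G \subset <[a]> * <[b]>.
  rewrite -norm_joinEr // defG gen_subG; apply/subsetP => y.
  by rewrite !inE => /orP[] /eqP ->; rewrite mem_gen // inE cycle_id ?orbT.
move/(subsetP GAB)/mulsgP => [_ _ /cycleP[i ->] /cycleP[j ->] ->].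
have jn : ((j %% (2 * n))./2 < n)%N by rewrite ltn_half_double -mul2n ltn_pmod ?muln_gt0.
exists (Ordinal (ltn_pmod i m_gt0), Ordinal jn, odd (j %% (2 * n))).
have halvesK r : (odd r + 2 * r./2)%N = r by rewrite mul2n odd_double_half.
by rewrite /meta_elt /= halvesK -(expg_mod i am) -(expg_mod j b2n).
Qed.

Lemma meta_elt_inj : injective meta_elt.
Proof.
have onto : meta_elt @: setT = G.
  apply/eqP; rewrite eqEsubset; apply/andP; split; apply/subsetP => x.
    by case/imsetP=> p _ ->; apply: meta_elt_in.
  by case/meta_elt_onto=> p ->; rewrite imset_f ?inE.
have card_img : #|meta_elt @: setT| == #|[set: 'I_m * 'I_n * bool]|.
  by rewrite onto cardG cardsT !card_prod !card_ord card_bool; apply/eqP; lia.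
by move/imset_injP: card_img => inj_on p q; apply: inj_on; rewrite inE.
Qed.

Let odd_a : odd #[a].
Proof. by apply: dvdn_odd odd_m; rewrite order_dvdn am. Qed.

Lemma expg_a_eq (i k : 'I_m) : (a ^+ i == a ^+ k) = (i == k).
Proof.
pose j0 := Ordinal n_gt0; have /(_ (i, j0, false) (k, j0, false)) inj := meta_elt_inj.
apply/eqP/eqP => [aik | -> //]; have /inj[] // : meta_elt (i, j0, false) = meta_elt (k, j0, false).
by rewrite /meta_elt /= aik.
Qed.

Lemma expg_a_eq1 (i : 'I_m) : (a ^+ i == 1) = (i == 0 :> nat).
Proof. by rewrite -(expg0 a) -[0%N]/(val (Ordinal m_gt0)) (expg_a_eq i (Ordinal m_gt0)). Qed.

Lemma meta_elt_commute p q :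
  (meta_elt p * meta_elt q == meta_elt q * meta_elt p)
  = if p.2 then (if q.2 then p.1.1 == q.1.1 else q.1.1 == 0 :> nat)
    else (if q.2 then p.1.1 == 0 :> nat else true).
Proof.
rewrite (commute_cycle_mul_b conj_b_a odd_a) ?mem_cycle //.
have odd_exp (e : bool) j : odd (e + 2 * j) = e by rewrite oddD oddM addbF oddb.
by rewrite !odd_exp expg_a_eq !expg_a_eq1.
Qed.

Definition meta_central (p : 'I_m * 'I_n * bool) := (p.1.1 == 0 :> nat) && ~~ p.2.

Definition meta_class_of (p : 'I_m * 'I_n * bool) : 'I_m.+1 :=
  if p.2 then lift ord0 p.1.1 else ord0.

Lemma meta_elt_center p : (meta_elt p \in 'Z(G)) = meta_central p.
Proof.
pose j0 := Ordinal n_gt0; pose pa := (Ordinal m_gt1, j0, false).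
pose pb := (Ordinal m_gt0, j0, true).
apply/centerP/idP => [[_ cpG] | p_central].
  have cp q : meta_elt p * meta_elt q == meta_elt q * meta_elt p.
    by apply/eqP/cpG/meta_elt_in.
  have := cp pa; have := cp pb; rewrite !meta_elt_commute /meta_central /=.
  by case: p.2 => //= ->.
split=> [|_ /meta_elt_onto[q ->]]; first exact: meta_elt_in.
by apply/eqP; rewrite meta_elt_commute; move: p_central => /andP[-> /negbTE->]; case: q.2.
Qed.

Lemma meta_elt_commute_class p q : ~~ meta_central p -> ~~ meta_central q ->
  (meta_elt p * meta_elt q == meta_elt q * meta_elt p)
  = (meta_class_of p == meta_class_of q).
Proof.
rewrite meta_elt_commute /meta_central /meta_class_of.
case: p.2; case: q.2; rewrite /= ?andbT ?(inj_eq lift_inj) //.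
- by move=> _ /negbTE ->; rewrite eq_sym (negbTE (neq_lift _ _)).
- by move=> /negbTE -> _; rewrite (negbTE (neq_lift _ _)).
Qed.

Lemma nc_vertices_meta : nc_vertices G = meta_elt @: [set p | ~~ meta_central p].
Proof.
apply/setP => x; rewrite inE; apply/andP/imsetP => [[xZ /meta_elt_onto[p xp]] | [p]].
  by exists p; rewrite // inE -meta_elt_center -xp.
by rewrite inE -meta_elt_center => pZ ->; rewrite pZ meta_elt_in.
Qed.

Definition meta_class (x : gT) : 'I_m.+1 :=
  if [pick p | meta_elt p == x] is Some p then meta_class_of p else ord0.

Lemma meta_classE p : meta_class (meta_elt p) = meta_class_of p.
Proof.
rewrite /meta_class; case: pickP => [q /eqP/meta_elt_inj -> // | /(_ p)].
by rewrite eqxx.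
Qed.

Lemma meta_commute_classes :
  {in nc_vertices G &, forall x y, (x * y == y * x) = (meta_class x == meta_class y)}.
Proof.
move=> x y; rewrite nc_vertices_meta => /imsetP[p + ->] /imsetP[q + ->].
by rewrite !inE !meta_classE; apply: meta_elt_commute_class.
Qed.

Lemma meta_class_card r :
  #|[set x in nc_vertices G | meta_class x == r]| = if r == ord0 then (m.-1 * n)%N else n.
Proof.
have -> : [set x in nc_vertices G | meta_class x == r]
          = meta_elt @: [set p | ~~ meta_central p & meta_class_of p == r].
  apply/setP => x; rewrite inE nc_vertices_meta.
  apply/andP/imsetP => [[/imsetP[p + ->]] | [p]].
    by rewrite inE meta_classE => pV pr; exists p; rewrite // inE pV.
  by rewrite inE => /andP[pV pr] ->; rewrite meta_classE pr imset_f ?inE.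
rewrite card_imset; last exact: meta_elt_inj.
case: (unliftP ord0 r) => [i ->|->].
  have -> : [set p | ~~ meta_central p & meta_class_of p == lift ord0 i]
            = setX (setX [set i] setT) [set true].
    apply/setP => [[[k j] e]]; rewrite !inE /meta_central /meta_class_of /=.
    by case: e; rewrite /= ?andbF ?andbT ?(inj_eq lift_inj).
  by rewrite eq_sym (negbTE (neq_lift _ _)) !cardsX !cards1 cardsT card_ord mul1n muln1.
have -> : [set p | ~~ meta_central p & meta_class_of p == ord0]
          = setX (setX [set~ Ordinal m_gt0] setT) [set false].
  apply/setP => [[[k j] e]]; rewrite !inE /meta_central /meta_class_of /=.
  by case: e; rewrite /= ?andbT ?andbF // eq_sym (negbTE (neq_lift _ _)).
by rewrite eqxx !cardsX cardsC1 cards1 cardsT !card_ord muln1.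
Qed.

End MetacyclicGroup.

Lemma XsubC_mul (R : comNzRingType) (x y : R) :
  ('X - x%:P) * ('X - y%:P) = 'X^2 - (x + y)%:P * 'X + (x * y)%:P.
Proof. by rewrite polyCD polyCM; ring. Qed.

Lemma metacyclic_quadratic_factor (m n : nat) : (0 < m)%N ->
  let t := 'X - (n%:R - 2)%:P : {poly algC} in
  let d := (m.-1 * n)%:R : {poly algC} in let e := n%:R : {poly algC} in
  (t - (d - e)) * (t - (d + e *+ m)) - (d - e) * d
  = ('X - ((- (4 + n%:R - 3 * m%:R * n%:R)
             + n%:R * sqrtC (5 * m%:R ^+ 2 - 10 * m%:R + 9)) / 2)%:P)
    * ('X - ((- (4 + n%:R - 3 * m%:R * n%:R)
               - n%:R * sqrtC (5 * m%:R ^+ 2 - 10 * m%:R + 9)) / 2)%:P).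
Proof.
move=> m_gt0 t d e; rewrite XsubC_mul.
set B := 4 + n%:R - 3 * m%:R * n%:R; set S := sqrtC _.
have S2 : S ^+ 2 = 5 * m%:R ^+ 2 - 10 * m%:R + 9 by rewrite sqrtCK.
have -> : (- B + n%:R * S) / 2 + (- B - n%:R * S) / 2 = - B by field.
have -> : (- B + n%:R * S) / 2 * ((- B - n%:R * S) / 2)
          = (2 - (m%:R - 1) * n%:R) * (2 - n%:R - (m%:R - 1) * n%:R - m%:R * n%:R)
            - ((m%:R - 1) * n%:R - n%:R) * ((m%:R - 1) * n%:R).
  rewrite (_ : _ * _ = (B ^+ 2 - n%:R ^+ 2 * S ^+ 2) / 4); last by field.
  by rewrite S2 /B; field.
rewrite /t /d /e natrM -subn1 natrB //.
by rewrite !(rmorphD, rmorphB, rmorphN, rmorphM, rmorphXn, rmorph_nat) /B; ring.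
Qed.

Theorem theorem6p1 (gT : finGroupType) (G : {group gT}) (a b : gT) (m n : nat) :
  odd m -> (2 < m)%N -> (1 <= n)%N ->
  (G : {set gT}) = <<[set a; b]>>%g ->
  (a ^+ m = 1)%g -> (b ^+ (2 * n) = 1)%g -> (b * a * b^-1 = a^-1)%g ->
  #|G| = (2 * m * n)%N ->
  char_poly (nc_dist_mx G) =
    (('X + 2%:P) ^+ (2 * m * n - (m + n) - 1)
     * ('X - (n%:R - 2)%:P) ^+ (m - 1)
     * ('X - ((- (4 + n%:R - 3 * m%:R * n%:R)
               + n%:R * sqrtC (5 * m%:R ^+ 2 - 10 * m%:R + 9)) / 2)%:P)
     * ('X - ((- (4 + n%:R - 3 * m%:R * n%:R)
               - n%:R * sqrtC (5 * m%:R ^+ 2 - 10 * m%:R + 9)) / 2)%:P))%R.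
Proof.
move=> odd_m m_gt2 n_gt0 defG am b2n conj_b_a cardG; have m_gt1 := ltnW m_gt2.
have /= := char_poly_nc_dist_mx_classes
  (meta_commute_classes odd_m m_gt1 n_gt0 defG am b2n conj_b_a cardG)
  (meta_class_card odd_m m_gt1 n_gt0 defG am b2n conj_b_a cardG).
set s := 'X + 2%:P; set t := 'X - (n%:R - 2)%:P.
have -> : s - n%:R = t by rewrite /s /t polyCB polyC_natr; ring.
have /= := @metacyclic_quadratic_factor m n (ltnW m_gt1); rewrite -/t => -> cp_eq.
have eE : (m.-1 * n + m * n = m.+1 + (2 * m * n - (m + n) - 1))%N by nia.
have eT : t ^+ m.+1 = t ^+ 2 * t ^+ (m - 1) by rewrite -exprD; congr (_ ^+ _); lia.
have s_neq0 : s != 0 by rewrite monic_neq0 ?monicXaddC.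
have t_neq0 : t != 0 by rewrite monic_neq0 ?monicXsubC.
apply: (mulfI (x := s ^+ m.+1 * t ^+ 2)); first by rewrite mulf_neq0 ?expf_neq0.
rewrite cp_eq eE exprD eT.
(* Abstracting the two linear factors keeps [ring] fast. *)
set L1 := 'X - _%:P; set L2 := 'X - _%:P.
by ring.
Qed.
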